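(* Let $N\ge 1$ and let $h_\beta,h_1,\dots,h_{N-1}$ be arbitrary real numbers. Consider the $(N+1)$-qubit system (a sensor qubit $\beta$ followed by chain qubits $1,\dots,N$) with Hamiltonian $$H=\frac{h_\beta}{2}(X_\beta X_1+Y_\beta Y_1)+\sum_{k=1}^{N-1}\frac{h_k}{2}(X_kX_{k+1}+Y_kY_{k+1}),$$ initial state $\rho_0=\frac{I+X_\beta}{2}\otimes \frac{I}{2^N}$ (sensor in the $+1$ eigenstate of $X$, chain maximally mixed), and output $y(t)=\operatorname{Tr}\big(M\,e^{-\mathrm{i}Ht}\rho_0e^{\mathrm{i}Ht}\big)$ where the measured observable is $M=Y_\beta$ or $M=Z_\beta$. Then $y(t)=0$ for all $t\ge 0$ and all values of the parameters. Consequently the single-qubit sensor cannot identify the parameters $h_\beta,h_1,\dots,h_{N-1}$ (distinct parameter values yield identical outputs).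
   Context: $X,Y,Z$ denote the Pauli matrices $\sigma_x=\begin{pmatrix}0&1\\1&0\end{pmatrix}$, $\sigma_y=\begin{pmatrix}0&-\mathrm{i}\\ \mathrm{i}&0\end{pmatrix}$, $\sigma_z=\begin{pmatrix}1&0\\0&-1\end{pmatrix}$; a subscript indicates which qubit the operator acts on, with identity on all other qubits (tensor products and identities are suppressed). $\hbar=1$. *)

From Stdlib Require Import Reals Lra Lia Arith Bool List.
Open Scope R_scope.

Record C := mkC { re : R ; im : R }.
Definition C0 : C := mkC 0 0.
Definition C1 : C := mkC 1 0.
Definition Ci : C := mkC 0 1.
Definition RtoC (x : R) : C := mkC x 0.
Definition Cadd (a b : C) : C := mkC (re a + re b) (im a + im b).
Definition Copp (a : C) : C := mkC (- re a) (- im a).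
Definition Cmul (a b : C) : C :=
  mkC (re a * re b - im a * im b) (re a * im b + im a * re b).
Definition Cconj (a : C) : C := mkC (re a) (- im a).

Fixpoint csum (f : nat -> C) (n : nat) : C :=
  match n with O => C0 | S m => Cadd (csum f m) (f m) end.

Definition Mat := nat -> nat -> C.
Definition mzero : Mat := fun _ _ => C0.
Definition mid : Mat := fun i j => if Nat.eqb i j then C1 else C0.
Definition madd (A B : Mat) : Mat := fun i j => Cadd (A i j) (B i j).
Definition mscale (c : C) (A : Mat) : Mat := fun i j => Cmul c (A i j).
Definition mmul (d : nat) (A B : Mat) : Mat :=
  fun i j => csum (fun k => Cmul (A i k) (B k j)) d.
Definition madj (A : Mat) : Mat := fun i j => Cconj (A j i).
Definition mtrace (d : nat) (A : Mat) : C := csum (fun i => A i i) d.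
Fixpoint mpow (d : nat) (A : Mat) (k : nat) : Mat :=
  match k with O => mid | S m => mmul d A (mpow d A m) end.

Fixpoint expm_partial (d : nat) (A : Mat) (n : nat) : Mat :=
  match n with
  | O => mid
  | S m => madd (expm_partial d A m)
                (mscale (RtoC (/ INR (fact (S m)))) (mpow d A (S m)))
  end.

Definition is_expm (d : nat) (A U : Mat) : Prop :=
  forall i j, (i < d)%nat -> (j < d)%nat ->
    Un_cv (fun n => re (expm_partial d A n i j)) (re (U i j)) /\
    Un_cv (fun n => im (expm_partial d A n i j)) (im (U i j)).

Definition sigX : Mat := fun a b =>
  match a, b with 0, 1 => C1 | 1, 0 => C1 | _, _ => C0 end%nat.
Definition sigY : Mat := fun a b =>
  match a, b with 0, 1 => Copp Ci | 1, 0 => Ci | _, _ => C0 end%nat.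
Definition sigZ : Mat := fun a b =>
  match a, b with 0, 0 => C1 | 1, 1 => Copp C1 | _, _ => C0 end%nat.

(* bit q of the basis index i (qubit q of the computational basis state |i>) *)
Definition bit (q i : nat) : nat := Nat.b2n (Nat.testbit i q).

(* On n qubits (dimension 2^n): the operator s acting on qubit q, tensored
   with the identity on all other qubits. *)
Definition on_qubit (n q : nat) (s : Mat) : Mat := fun i j =>
  if forallb (fun r => Nat.eqb r q || Nat.eqb (bit r i) (bit r j)) (seq 0 n)
  then s (bit q i) (bit q j) else C0.

(* The (N+1)-qubit system: qubit 0 is the sensor beta, qubits 1..N the chain. *)
Definition nq (N : nat) : nat := S N.
Definition dim (N : nat) : nat := 2 ^ nq N.
Definition Xq N q := on_qubit (nq N) q sigX.
Definition Yq N q := on_qubit (nq N) q sigY.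
Definition Zq N q := on_qubit (nq N) q sigZ.

Definition xy_term (N : nat) (h : R) (a b : nat) : Mat :=
  mscale (RtoC (h / 2))
    (madd (mmul (dim N) (Xq N a) (Xq N b)) (mmul (dim N) (Yq N a) (Yq N b))).

Fixpoint chain_sum (N : nat) (h : nat -> R) (m : nat) : Mat :=
  match m with
  | O => mzero
  | S p => madd (chain_sum N h p) (xy_term N (h (S p)) (S p) (S (S p)))
  end.

Definition Ham (N : nat) (hb : R) (h : nat -> R) : Mat :=
  madd (xy_term N hb 0 1) (chain_sum N h (N - 1)).

(* rho_0 = (I + X_beta)/2 (x) I/2^N  =  (I + X_beta) / 2^(N+1) *)
Definition rho0 (N : nat) : Mat :=
  mscale (RtoC (/ 2 ^ nq N)) (madd mid (Xq N 0)).

(* y(t) = Tr(M U rho_0 V) where U = e^{-iHt}, V = e^{iHt} *)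
Definition output (N : nat) (M U V : Mat) : C :=
  mtrace (dim N) (mmul (dim N) M (mmul (dim N) U (mmul (dim N) (rho0 N) V))).

(* The global spin flip P = X ⊗ ... ⊗ X reverses the computational basis,
   i ↦ 2^(N+1) - 1 - i.  It commutes with X_a, X_a X_b and Y_a Y_b and
   anticommutes with Y_β and Z_β.  Hence H, every partial sum of the
   exponential series of ±itH, and ρ0 are P-even, while M is P-odd; so each
   approximation M U_n ρ0 V_n is P-odd and has trace 0, and the trace of the
   limit M U ρ0 V vanishes as well. *)

From Pilot Require Import Defs.
From Stdlib Require Import Reals.
From Stdlib Require Import Lra Lia Arith Bool List.
Open Scope R_scope.
(* Re-import so that [C] denotes the complex numbers, not Reals' binomial [C]. *)
Import Defs.

Lemma C_ext (a b : C) : re a = re b -> im a = im b -> a = b.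
Proof. destruct a, b; simpl; intros; subst; reflexivity. Qed.

Ltac ceq := apply C_ext; simpl; ring.

Lemma csum_ext (f g : nat -> C) (n : nat) :
  (forall k, (k < n)%nat -> f k = g k) -> csum f n = csum g n.
Proof.
  induction n as [|n IH]; intros Hfg; simpl; auto.
  rewrite IH by (intros; apply Hfg; lia). rewrite Hfg by lia. reflexivity.
Qed.

Lemma csum_mull (c : C) (f : nat -> C) (n : nat) :
  csum (fun k => Cmul c (f k)) n = Cmul c (csum f n).
Proof. induction n as [|n IH]; simpl; [|rewrite IH]; ceq. Qed.

Lemma csum_recl (f : nat -> C) (n : nat) :
  csum f (S n) = Cadd (f 0%nat) (csum (fun k => f (S k)) n).
Proof.
  induction n as [|n IH]; [simpl; ceq|].
  change (csum f (S (S n))) with (Cadd (csum f (S n)) (f (S n))).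
  rewrite IH; simpl; ceq.
Qed.

Lemma csum_rev (f : nat -> C) (n : nat) :
  csum f n = csum (fun k => f (n - 1 - k)%nat) n.
Proof.
  induction n as [|n IH]; [reflexivity|].
  rewrite (csum_recl (fun k => f (S n - 1 - k)%nat)).
  change (csum f (S n)) with (Cadd (csum f n) (f n)).
  rewrite IH, (csum_ext (fun k => f (n - 1 - k)%nat) (fun k => f (S n - 1 - S k)%nat))
    by (intros; f_equal; lia).
  replace (S n - 1 - 0)%nat with n by lia.
  ceq.
Qed.

(* [flip_sym d s A] says P A P = s A for the basis reversal P : i ↦ d - 1 - i. *)
Definition flip_sym (d : nat) (s : R) (A : Mat) : Prop :=
  forall i j, (i < d)%nat -> (j < d)%nat ->
    A (d - 1 - i)%nat (d - 1 - j)%nat = Cmul (RtoC s) (A i j).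

Section FlipSym.

Variable d : nat.

Lemma flip_sym_zero (s : R) : flip_sym d s mzero.
Proof. intros i j _ _; unfold mzero; ceq. Qed.

Lemma flip_sym_mid : flip_sym d 1 mid.
Proof.
  intros i j Hi Hj; unfold mid.
  destruct (Nat.eqb_spec (d - 1 - i) (d - 1 - j)), (Nat.eqb_spec i j); try lia; ceq.
Qed.

Lemma flip_sym_add (s : R) (A B : Mat) :
  flip_sym d s A -> flip_sym d s B -> flip_sym d s (madd A B).
Proof. intros HA HB i j Hi Hj; unfold madd; rewrite HA, HB by auto; ceq. Qed.

Lemma flip_sym_scale (s : R) (c : C) (A : Mat) :
  flip_sym d s A -> flip_sym d s (mscale c A).
Proof. intros HA i j Hi Hj; unfold mscale; rewrite HA by auto; ceq. Qed.

(* The summation index is reversed along with i and j. *)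
Lemma flip_sym_mul (s1 s2 s : R) (A B : Mat) : s1 * s2 = s ->
  flip_sym d s1 A -> flip_sym d s2 B -> flip_sym d s (mmul d A B).
Proof.
  intros Hs HA HB i j Hi Hj; unfold mmul.
  rewrite csum_rev, <- csum_mull.
  apply csum_ext; intros k Hk.
  rewrite HA, HB by lia. subst s. ceq.
Qed.

Lemma flip_sym_mul_even (s : R) (A B : Mat) :
  flip_sym d s A -> flip_sym d 1 B -> flip_sym d s (mmul d A B).
Proof. apply flip_sym_mul; ring. Qed.

Lemma flip_sym_pow (A : Mat) (k : nat) : flip_sym d 1 A -> flip_sym d 1 (mpow d A k).
Proof.
  intros HA; induction k as [|k IH]; simpl.
  - exact flip_sym_mid.
  - exact (flip_sym_mul_even _ _ _ HA IH).
Qed.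

Lemma flip_sym_expm_partial (A : Mat) (n : nat) :
  flip_sym d 1 A -> flip_sym d 1 (expm_partial d A n).
Proof.
  intros HA; induction n as [|n IH]; simpl.
  - exact flip_sym_mid.
  - apply flip_sym_add; [exact IH|].
    apply flip_sym_scale; exact (flip_sym_pow A (S n) HA).
Qed.

Lemma mtrace_flip_odd (A : Mat) : flip_sym d (-1) A -> mtrace d A = C0.
Proof.
  intros HA; unfold mtrace.
  assert (Hneg : csum (fun i => A i i) d = Cmul (RtoC (-1)) (csum (fun i => A i i) d)).
  { rewrite csum_rev at 1. rewrite <- csum_mull.
    apply csum_ext; intros; apply HA; auto. }
  destruct (csum (fun i => A i i) d) as [x y].
  unfold Cmul, RtoC in Hneg; simpl in Hneg; injection Hneg; intros.
  apply C_ext; simpl; lra.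
Qed.

End FlipSym.

Lemma bit_rev (n i r : nat) : (i < 2 ^ n)%nat -> (r < n)%nat ->
  bit r (2 ^ n - 1 - i) = (1 - bit r i)%nat.
Proof.
  intros Hi Hr; unfold bit.
  assert (Hldiff : (2 ^ n - 1 - i = Nat.ldiff (Nat.ones n) i)%nat).
  { rewrite <- Nat.sub_nocarry_ldiff.
    - rewrite Nat.ones_equiv; lia.
    - apply Nat.ldiff_ones_r_low.
      destruct (Nat.eq_dec i 0) as [->|Hi0]; [change (Nat.log2 0) with 0%nat; lia|].
      apply Nat.log2_lt_pow2; lia. }
  rewrite Hldiff, Nat.ldiff_spec, Nat.ones_spec_low by assumption.
  destruct (Nat.testbit i r); reflexivity.
Qed.

Lemma bit_le1 (r i : nat) : (bit r i <= 1)%nat.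
Proof. unfold bit; destruct (Nat.testbit i r); simpl; lia. Qed.

Lemma forallb_ext_in {A : Type} (f g : A -> bool) (l : list A) :
  (forall x, In x l -> f x = g x) -> forallb f l = forallb g l.
Proof.
  induction l as [|a l IH]; intros Hfg; simpl; auto.
  rewrite Hfg by (left; reflexivity).
  rewrite IH by (intros; apply Hfg; right; assumption). reflexivity.
Qed.

Lemma flip_sym_on_qubit (n q : nat) (s : R) (sg : Mat) : (q < n)%nat ->
  (forall a b, (a <= 1)%nat -> (b <= 1)%nat ->
     sg (1 - a)%nat (1 - b)%nat = Cmul (RtoC s) (sg a b)) ->
  flip_sym (2 ^ n) s (on_qubit n q sg).
Proof.
  intros Hq Hsg i j Hi Hj; unfold on_qubit.
  rewrite (forallb_ext_in _ (fun r => Nat.eqb r q || Nat.eqb (bit r i) (bit r j))).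
  - destruct forallb; [|ceq].
    rewrite !bit_rev by assumption. apply Hsg; apply bit_le1.
  - intros r Hr; apply in_seq in Hr.
    rewrite !bit_rev by lia.
    pose proof (bit_le1 r i); pose proof (bit_le1 r j).
    f_equal; apply Bool.eq_iff_eq_true; rewrite !Nat.eqb_eq; lia.
Qed.

Ltac pauli_flip := intros a b Ha Hb;
  destruct a as [|[|]]; destruct b as [|[|]]; try lia; simpl; ceq.

Lemma flip_sym_X (N q : nat) : (q < nq N)%nat -> flip_sym (dim N) 1 (Xq N q).
Proof. intros; apply flip_sym_on_qubit; [assumption|pauli_flip]. Qed.

Lemma flip_sym_Y (N q : nat) : (q < nq N)%nat -> flip_sym (dim N) (-1) (Yq N q).
Proof. intros; apply flip_sym_on_qubit; [assumption|pauli_flip]. Qed.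

Lemma flip_sym_Z (N q : nat) : (q < nq N)%nat -> flip_sym (dim N) (-1) (Zq N q).
Proof. intros; apply flip_sym_on_qubit; [assumption|pauli_flip]. Qed.

Lemma flip_sym_xy_term (N : nat) (h : R) (a b : nat) :
  (a < nq N)%nat -> (b < nq N)%nat -> flip_sym (dim N) 1 (xy_term N h a b).
Proof.
  intros Ha Hb; unfold xy_term.
  apply flip_sym_scale, flip_sym_add.
  - apply flip_sym_mul_even; apply flip_sym_X; assumption.
  - apply (flip_sym_mul _ (-1) (-1)); [ring|apply flip_sym_Y..]; assumption.
Qed.

Lemma flip_sym_chain_sum (N : nat) (h : nat -> R) (m : nat) :
  (m <= N - 1)%nat -> flip_sym (dim N) 1 (chain_sum N h m).
Proof.
  induction m as [|m IH]; intros Hm; simpl.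
  - apply flip_sym_zero.
  - apply flip_sym_add; [apply IH; lia|apply flip_sym_xy_term; unfold nq; lia].
Qed.

Lemma flip_sym_Ham (N : nat) (hb : R) (h : nat -> R) :
  (1 <= N)%nat -> flip_sym (dim N) 1 (Ham N hb h).
Proof.
  intros HN; unfold Ham.
  apply flip_sym_add; [apply flip_sym_xy_term; unfold nq; lia|].
  apply flip_sym_chain_sum; lia.
Qed.

Lemma flip_sym_rho0 (N : nat) : flip_sym (dim N) 1 (rho0 N).
Proof.
  apply flip_sym_scale, flip_sym_add; [apply flip_sym_mid|].
  apply flip_sym_X; unfold nq; lia.
Qed.

Definition Ccv (a : nat -> C) (z : C) : Prop :=
  Un_cv (fun n => re (a n)) (re z) /\ Un_cv (fun n => im (a n)) (im z).

(* [is_expm d A U] unfolds to [mat_cv d (expm_partial d A) U]. *)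
Definition mat_cv (d : nat) (F : nat -> Mat) (L : Mat) : Prop :=
  forall i j, (i < d)%nat -> (j < d)%nat -> Ccv (fun n => F n i j) (L i j).

Lemma Un_cv_const (x : R) : Un_cv (fun _ => x) x.
Proof. intros eps Heps; exists 0%nat; intros; rewrite R_dist_eq; assumption. Qed.

Lemma Ccv_const (z : C) : Ccv (fun _ => z) z.
Proof. split; apply Un_cv_const. Qed.

Lemma Ccv_const_eq (a : nat -> C) (c z : C) :
  (forall n, a n = c) -> Ccv a z -> z = c.
Proof.
  intros Hac [Hre Him].
  apply C_ext; eapply UL_sequence; eauto;
    intros eps Heps; exists 0%nat; intros n _; rewrite Hac, R_dist_eq; assumption.
Qed.

Lemma Ccv_mul (a b : nat -> C) (x y : C) :
  Ccv a x -> Ccv b y -> Ccv (fun n => Cmul (a n) (b n)) (Cmul x y).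
Proof.
  intros [Hax Hay] [Hbx Hby]; split; simpl.
  - apply CV_minus; apply CV_mult; assumption.
  - apply CV_plus; apply CV_mult; assumption.
Qed.

Lemma Ccv_csum (f : nat -> nat -> C) (g : nat -> C) (n : nat) :
  (forall k, (k < n)%nat -> Ccv (fun m => f m k) (g k)) ->
  Ccv (fun m => csum (f m) n) (csum g n).
Proof.
  induction n as [|n IH]; intros Hfg; simpl; [apply Ccv_const|].
  destruct IH as [IHre IHim]; [intros; apply Hfg; lia|].
  destruct (Hfg n) as [Hre Him]; [lia|].
  split; apply CV_plus; assumption.
Qed.

Lemma mat_cv_const (d : nat) (A : Mat) : mat_cv d (fun _ => A) A.
Proof. intros i j _ _; apply Ccv_const. Qed.

Lemma mat_cv_mul (d : nat) (F G : nat -> Mat) (A B : Mat) :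
  mat_cv d F A -> mat_cv d G B -> mat_cv d (fun m => mmul d (F m) (G m)) (mmul d A B).
Proof.
  intros HF HG i j Hi Hj; unfold mmul.
  apply (Ccv_csum (fun m k => Cmul (F m i k) (G m k j))); intros k Hk.
  apply Ccv_mul; [apply HF|apply HG]; assumption.
Qed.

Lemma mtrace_cv (d : nat) (F : nat -> Mat) (L : Mat) :
  mat_cv d F L -> Ccv (fun m => mtrace d (F m)) (mtrace d L).
Proof.
  intros HF; unfold mtrace.
  apply (Ccv_csum (fun m i => F m i i)); intros; apply HF; assumption.
Qed.

Theorem proposition1 :
  forall (N : nat) (hb : R) (h : nat -> R) (M : Mat) (t : R) (U V : Mat),
    (1 <= N)%nat ->
    (M = Yq N 0 \/ M = Zq N 0) ->
    0 <= t ->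
    is_expm (dim N) (mscale (mkC 0 (- t)) (Ham N hb h)) U ->
    is_expm (dim N) (mscale (mkC 0 t) (Ham N hb h)) V ->
    output N M U V = C0.
Proof.
  intros N hb h M t U V HN HM _ HU HV.
  set (d := dim N).
  set (Un := expm_partial d (mscale (mkC 0 (- t)) (Ham N hb h))).
  set (Vn := expm_partial d (mscale (mkC 0 t) (Ham N hb h))).
  set (W := fun m => mmul d M (mmul d (Un m) (mmul d (rho0 N) (Vn m)))).
  assert (HM_odd : flip_sym d (-1) M).
  { destruct HM as [-> | ->]; [apply flip_sym_Y|apply flip_sym_Z]; unfold nq; lia. }
  assert (HW_trace : forall m, mtrace d (W m) = C0).
  { intros m; apply mtrace_flip_odd.
    apply flip_sym_mul_even; [exact HM_odd|].
    apply flip_sym_mul_even;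
      [apply flip_sym_expm_partial, flip_sym_scale, flip_sym_Ham; exact HN|].
    apply flip_sym_mul_even; [apply flip_sym_rho0|].
    apply flip_sym_expm_partial, flip_sym_scale, flip_sym_Ham; exact HN. }
  assert (HW_cv : mat_cv d W (mmul d M (mmul d U (mmul d (rho0 N) V)))).
  { apply mat_cv_mul; [apply mat_cv_const|].
    apply mat_cv_mul; [exact HU|].
    apply mat_cv_mul; [apply mat_cv_const|exact HV]. }
  exact (Ccv_const_eq _ _ _ HW_trace (mtrace_cv _ _ _ HW_cv)).
Qed.
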